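(* Let $s\ge1$, $d\ge0$ be integers. For every $n\times m$ $(0,1)$-matrix $M$ with ${\rm br}_s(M)\le d$, $$r(M)\cdot c(M)\le \binom{d}{\le s}2^d.$$
   Context: For a $(0,1)$-matrix $M$ of size $n\times m$, $M[i,j]$ denotes its $(i,j)$ entry and $[n]=\{1,\dots,n\}$. The $s$-binary rank ${\rm br}_s(M)$ is the minimal integer $d\ge 0$ such that there exist $d$ sets (rectangles) $I_k\times J_k$ with $I_k\subseteq[n]$, $J_k\subseteq[m]$, $k\in[d]$, with $M[i,j]=1$ for all $(i,j)\in I_k\times J_k$ and all $k$, and such that every $(i,j)$ with $M[i,j]=1$ lies in at least one and at most $s$ of the rectangles. $r(M)$ and $c(M)$ denote the numbers of distinct rows and distinct columns of $M$. $\binom{d}{\le s}=\sum_{i=0}^{s}\binom{d}{i}$. *)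

From mathcomp Require Import all_boot all_order all_algebra.
Set Implicit Arguments. Unset Strict Implicit. Unset Printing Implicit Defensive.

(* A (0,1)-matrix is an n x m matrix with boolean entries (true = 1).
   A rectangle is a pair (I, J) of a row set and a column set. *)
Definition rect n m := ({set 'I_n} * {set 'I_m})%type.

Definition is_s_cover (s : nat) n m (M : 'M[bool]_(n, m)) d
    (R : {ffun 'I_d -> rect n m}) : bool :=
  [forall k, forall i, forall j, (i \in (R k).1) && (j \in (R k).2) ==> M i j]
  && [forall i, forall j, M i j ==>
        (0 < #|[set k | (i \in (R k).1) && (j \in (R k).2)]| <= s)].

Definition has_s_cover (s : nat) n m (M : 'M[bool]_(n, m)) (d : nat) : bool :=
  [exists R : {ffun 'I_d -> rect n m}, is_s_cover s M R].

Definition single_rect n m (M : 'M[bool]_(n, m)) (ij : 'I_n * 'I_m) : rect n m :=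
  if M ij.1 ij.2 then ([set ij.1], [set ij.2]) else (set0, set0).

Lemma s_cover_exists (s : nat) n m (M : 'M[bool]_(n, m)) :
  0 < s -> exists d, has_s_cover s M d.
Proof.
move=> s0; exists #|{: 'I_n * 'I_m}|.
apply/existsP.
exists [ffun k => single_rect M (enum_val k)].
apply/andP; split.
- apply/forallP=> k; apply/forallP=> i; apply/forallP=> j; apply/implyP.
  rewrite ffunE /single_rect; case: ifP => H /=; last by rewrite !inE.
  by rewrite !in_set1 => /andP [/eqP -> /eqP ->].
- apply/forallP=> i; apply/forallP=> j; apply/implyP=> Mij.
  set S := [set k | _].
  have -> : S = [set enum_rank (i, j)].
    apply/setP=> k; rewrite !inE ffunE /single_rect.
    case: ifP => H /=.
      rewrite !in_set1 -xpair_eqE.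
      have -> : ((enum_val k).1, (enum_val k).2) = enum_val k by case: (enum_val k).
      apply/eqP/eqP=> [->|->]; [by rewrite enum_valK | by rewrite enum_rankK].
    rewrite !inE /=; apply/esym/negbTE; apply/eqP=> Ek.
    by move: H; rewrite Ek enum_rankK /= Mij.
  by rewrite cards1.
Qed.

(* s-binary rank br_s(M): the least d admitting an s-cover by d rectangles
   (defined for s >= 1; for s = 0 it is set to 0, never used). *)
Definition br (s : nat) n m (M : 'M[bool]_(n, m)) : nat :=
  match (0 < s) as b return (0 < s) = b -> nat with
  | true => fun e => ex_minn (s_cover_exists M e)
  | false => fun _ => 0
  end erefl.

Definition nrows n m (M : 'M[bool]_(n, m)) : nat := #|[set row i M | i : 'I_n]|.
Definition ncols n m (M : 'M[bool]_(n, m)) : nat := #|[set col j M | j : 'I_m]|.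

Definition binom_le (d s : nat) : nat := \sum_(0 <= i < s.+1) 'C(d, i).

From mathcomp Require Import all_boot all_order all_algebra.
From mathcomp Require Import zify.

Set Implicit Arguments.
Unset Strict Implicit.
Unset Printing Implicit Defensive.

(* Label each row i of M by the 0/1 vector, indexed by the d rectangles of an
   s-cover, recording which rectangles contain i, and each column likewise.
   The entry M i j is determined by the two labels, and the number of common
   ones of the labels, i.e. of rectangles containing (i, j), is at most s.
   So it suffices to bound #|X| * #|Y| for families X, Y of vectors of length
   d in which every x in X and y in Y share at most s ones.  Split both
   families by the first coordinate and delete it: the parts X0, X1 both
   inject into X0 :|: X1 (likewise for Y), and the parts X1, Y1 share at most
   s - 1 ones, so induction on d together with Pascal's rule for
   binom_le d s = sum_(i <= s) 'C(d, i) gives the bound. *)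

Lemma sum_nat_of_bool (T : finType) (P : pred T) :
  \sum_(x : T) P x = #|[set x | P x]|.
Proof.
rewrite -sum1_card [RHS]big_mkcond.
by apply: eq_bigr => x _; rewrite inE; case: (P x).
Qed.

Definition meet_size d (x y : d.-tuple bool) : nat :=
  \sum_(k < d) (tnth x k && tnth y k).

Lemma meet_size_cons d (x y : d.+1.-tuple bool) :
  meet_size x y =
  (thead x && thead y) + meet_size (behead_tuple x) (behead_tuple y).
Proof.
rewrite /meet_size big_ord_recl; congr (_ + _); apply: eq_bigr => i _.
have -> : lift ord0 i = inord i.+1 by apply: ord_inj; rewrite lift0 inordK ?ltnS.
by rewrite !tnth_behead.
Qed.

Lemma meet_size_behead d (x y : d.+1.-tuple bool) :
  meet_size (behead_tuple x) (behead_tuple y) <= meet_size x y.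
Proof. by rewrite meet_size_cons leq_addl. Qed.

Definition split_head d (b : bool) (X : {set d.+1.-tuple bool}) :
  {set d.-tuple bool} :=
  [set behead_tuple x | x in X & thead x == b].

Lemma card_split_head d b (X : {set d.+1.-tuple bool}) :
  #|split_head b X| = #|[set x in X | thead x == b]|.
Proof.
apply: card_in_imset => x y; rewrite !inE => /andP [_ /eqP hx] /andP [_ /eqP hy].
move/(congr1 val) => /= e.
by rewrite [x]tuple_eta [y]tuple_eta hx hy; apply: val_inj; rewrite /= e.
Qed.

Lemma card_split_headD d (X : {set d.+1.-tuple bool}) :
  #|X| = #|split_head false X| + #|split_head true X|.
Proof.
rewrite !card_split_head addnC -(cardsID [set x | thead x] X).
by congr (_ + _); apply: eq_card => x; rewrite !inE; case: (thead x);
  rewrite ?andbT ?andbF.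
Qed.

Lemma mem_split_head d b (X : {set d.+1.-tuple bool}) z :
  z \in split_head b X -> exists2 x, x \in X & thead x = b /\ z = behead_tuple x.
Proof. by case/imsetP => x; rewrite inE => /andP [xX /eqP hx] ->; exists x. Qed.

Lemma binom_le0 d : binom_le d 0 = 1.
Proof. by rewrite /binom_le big_nat1 bin0. Qed.

Lemma binom_le_gt0 d s : 0 < binom_le d s.
Proof. by rewrite /binom_le big_ltn // bin0. Qed.

Lemma binom_leSS d s : binom_le d.+1 s.+1 = binom_le d s.+1 + binom_le d s.
Proof.
rewrite /binom_le big_nat_recl // [in RHS]big_nat_recl // !bin0.
under eq_bigr => i _ do rewrite binS.
by rewrite big_split /= addnA.
Qed.

Lemma leq_binom_le d d' s : d' <= d -> binom_le d' s <= binom_le d s.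
Proof. by move=> le_d'd; apply: leq_sum => i _; apply: leq_bin2l. Qed.

Lemma split_product_bound (a0 a1 b0 b1 u v : nat) :
  a0 <= u -> a1 <= u -> b0 <= v -> b1 <= v ->
  (a0 + a1) * (b0 + b1) <= 2 * (u * v) + 2 * (a1 * b1).
Proof. by move=> *; case: (leqP b0 b1) => ?; nia. Qed.

Lemma cross_intersecting_bound d s (X Y : {set d.-tuple bool}) :
  {in X & Y, forall x y, meet_size x y <= s} ->
  #|X| * #|Y| <= binom_le d s * 2 ^ d.
Proof.
elim: d s X Y => [|d IH] s X Y hXY.
  have card_le1 (Z : {set 0.-tuple bool}) : #|Z| <= 1.
    by rewrite (leq_trans (max_card _)) // card_tuple.
  rewrite expn0 muln1; apply: leq_trans (leq_mul (card_le1 X) (card_le1 Y)) _.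
  exact: binom_le_gt0.
set X0 := split_head false X; set X1 := split_head true X.
set Y0 := split_head false Y; set Y1 := split_head true Y.
have mem_tails (Z : {set d.+1.-tuple bool}) z :
    z \in split_head false Z :|: split_head true Z ->
    exists2 x, x \in Z & z = behead_tuple x.
  by case/setUP => /mem_split_head [x xZ [_ ->]]; exists x.
have tails_bound : #|X0 :|: X1| * #|Y0 :|: Y1| <= binom_le d s * 2 ^ d.
  apply: IH => _ _ /mem_tails [x xX ->] /mem_tails [y yY ->].
  exact: leq_trans (meet_size_behead x y) (hXY x y xX yY).
have heads_true z w : z \in X1 -> w \in Y1 -> (meet_size z w).+1 <= s.
  move=> /mem_split_head [x xX [hx ->]] /mem_split_head [y yY [hy ->]].
  by have := hXY x y xX yY; rewrite meet_size_cons hx hy.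
rewrite (card_split_headD X) (card_split_headD Y) expnS -/X0 -/X1 -/Y0 -/Y1.
have := split_product_bound (subset_leq_card (subsetUl X0 X1))
  (subset_leq_card (subsetUr X0 X1)) (subset_leq_card (subsetUl Y0 Y1))
  (subset_leq_card (subsetUr Y0 Y1)).
case: s hXY tails_bound heads_true => [|s] _ tails_bound heads_true.
  have no_true_pair : #|X1| * #|Y1| = 0.
    apply/eqP; rewrite muln_eq0 !cards_eq0; apply/orP.
    case: (set_0Vmem X1) => [->|[z zX1]]; [by left | right].
    apply/eqP/setP => w; rewrite inE.
    by apply/negbTE/negP => /(heads_true z w zX1).
  by rewrite binom_le0 in tails_bound; rewrite binom_le0 no_true_pair; nia.
have true_bound : #|X1| * #|Y1| <= binom_le d s * 2 ^ d.
  by apply: IH => z w zX1 wY1; rewrite -ltnS heads_true.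
by rewrite binom_leSS; nia.
Qed.

Section CoverSignatures.

Variables (s n m d : nat) (M : 'M[bool]_(n, m)) (R : {ffun 'I_d -> rect n m}).
Hypothesis cover : is_s_cover s M R.

Definition row_signature (i : 'I_n) : d.-tuple bool := [tuple i \in (R k).1 | k < d].
Definition col_signature (j : 'I_m) : d.-tuple bool := [tuple j \in (R k).2 | k < d].

Lemma meet_size_signature i j :
  meet_size (row_signature i) (col_signature j) =
  #|[set k | (i \in (R k).1) && (j \in (R k).2)]|.
Proof.
rewrite /meet_size -sum_nat_of_bool; apply: eq_bigr => k _.
by rewrite !tnth_mktuple.
Qed.

Lemma cover_entry i j : M i j = (0 < meet_size (row_signature i) (col_signature j)).
Proof.
case/andP: cover => /forallP in_ones /forallP covered; rewrite meet_size_signature.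
case Mij: (M i j); first by have /forallP/(_ j) := covered i; rewrite Mij => /andP [].
apply/esym/negbTE; rewrite -leqNgt leqn0 cards_eq0; apply/eqP/setP => k.
rewrite !inE; apply/negbTE/negP => in_k.
by have /forallP/(_ i)/forallP/(_ j) := in_ones k; rewrite in_k Mij.
Qed.

Lemma cover_meet_size_le i j : meet_size (row_signature i) (col_signature j) <= s.
Proof.
case Mij: (M i j); last by move: Mij; rewrite cover_entry; case: meet_size.
case/andP: cover => _ /forallP/(_ i)/forallP/(_ j).
by rewrite Mij meet_size_signature => /andP [].
Qed.

End CoverSignatures.

Lemma nrows_le_card_imset n m (M : 'M[bool]_(n, m)) (T : finType) (f : 'I_n -> T)
    (P : T -> 'I_m -> bool) :
  (forall i j, M i j = P (f i) j) -> nrows M <= #|[set f i | i : 'I_n]|.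
Proof.
move=> M_eq; rewrite /nrows.
have -> : [set row i M | i : 'I_n] = [set (\row_j P x j)%R | x in [set f i | i : 'I_n]].
  by rewrite -imset_comp; apply: eq_imset => i; apply/rowP => j; rewrite !mxE.
exact: leq_imset_card.
Qed.

Lemma ncols_le_card_imset n m (M : 'M[bool]_(n, m)) (T : finType) (g : 'I_m -> T)
    (P : 'I_n -> T -> bool) :
  (forall i j, M i j = P i (g j)) -> ncols M <= #|[set g j | j : 'I_m]|.
Proof.
move=> M_eq; rewrite /ncols.
have -> : [set col j M | j : 'I_m] = [set (\col_i P i y)%R | y in [set g j | j : 'I_m]].
  by rewrite -imset_comp; apply: eq_imset => j; apply/colP => i; rewrite !mxE.
exact: leq_imset_card.
Qed.

Lemma br_has_s_cover s n m (M : 'M[bool]_(n, m)) : 0 < s -> has_s_cover s M (br s M).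
Proof. by case: s => // s _; rewrite /br /=; case: ex_minnP. Qed.

Theorem lemma4 (s d n m : nat) (M : 'M[bool]_(n, m)) :
  1 <= s -> br s M <= d ->
  nrows M * ncols M <= binom_le d s * 2 ^ d.
Proof.
move=> s_gt0 br_le_d; have /existsP [R cover] := br_has_s_cover M s_gt0.
have rows_le := nrows_le_card_imset
  (P := fun x j => 0 < meet_size x (col_signature R j)) (cover_entry cover).
have cols_le := ncols_le_card_imset
  (P := fun i y => 0 < meet_size (row_signature R i) y) (cover_entry cover).
apply: leq_trans (leq_mul rows_le cols_le) _.
have signatures_meet :
    {in [set row_signature R i | i : 'I_n] & [set col_signature R j | j : 'I_m],
      forall x y, meet_size x y <= s}.
  move=> _ _ /imsetP [i _ ->] /imsetP [j _ ->].
  exact: cover_meet_size_le cover i j.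
apply: leq_trans (cross_intersecting_bound signatures_meet) _.
by rewrite leq_mul ?leq_binom_le ?leq_exp2l.
Qed.
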